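(* Let $n,m,q\ge 1$, let $\mathcal{X}\in\mathfrak{R}^n$ and let $f:\mathcal{X}\to\mathbb{R}^n$, $G:\mathcal{X}\to\mathbb{R}^{n\times m}$, $h:\mathcal{X}\to\mathbb{R}^q$ define the constrained system $\dot x=f(x)+G(x)u$, $y=h(x)$, $x\in\mathcal{X}$, $u\in\mathcal{U}\in\mathfrak{R}^m$. Put $\bar g(x)=\|G(x)G(x)^\intercal\|_\infty$ and assume $f(0)=0$, $h(0)=0$, $\bar g(0)=0$. Let $\Omega\in\mathfrak{R}^n$ with $\Omega\subseteq\mathcal{X}$, and let $\mathcal{T}=\{\sigma_i\}_{i=1}^{m_{\mathcal{T}}}$ be a triangulation of $\Omega$, $\sigma_i=\mathrm{co}(\{x_{i,j}\}_{j=0}^n)$, such that $f,G,h\in\mathcal{C}^2(\mathcal{T})$. For each $i$ let $\beta_i,\tilde\beta_i,\bar\beta_i$ be real numbers with $$\beta_i\ge\max_{p,q',r\in\mathbb{Z}_1^n}\max_{\xi\in\sigma_i}\Big|\tfrac{\partial^2 f^{(p)}}{\partial x^{(q')}\partial x^{(r)}}(\xi)\Big|,\quad \tilde\beta_i\ge\max_{q',r\in\mathbb{Z}_1^n}\max_{\xi\in\sigma_i}\Big|\tfrac{\partial^2 (h^\intercal h)}{\partial x^{(q')}\partial x^{(r)}}(\xi)\Big|,\quad \bar\beta_i\ge\max_{q',r\in\mathbb{Z}_1^n}\max_{\xi\in\sigma_i}\Big|\tfrac{\partial^2 \bar g}{\partial x^{(q')}\partial x^{(r)}}(\xi)\Big|$$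 (the indicated second derivatives being taken on $\sigma_i$), and for $j\in\mathbb{Z}_0^n$ let $$c_{i,j}=\tfrac{n}{2}\|x_{i,j}-x_{i,0}\|_2\big(\max_{k\in\mathbb{Z}_1^n}\|x_{i,k}-x_{i,0}\|_2+\|x_{i,j}-x_{i,0}\|_2\big).$$ For values $\mathbf{V}=\{V_x\}_{x\in\mathbb{E}_{\mathcal{T}}}\subset\mathbb{R}$, vectors $\mathbf{L}=\{l_i\}_{i=1}^{m_{\mathcal{T}}}\subset\mathbb{R}^n$ and scalars $b_1,\gamma$, define $$H_{i,j}=f(x_{i,j})^\intercal\nabla V_i+\tfrac12\|h(x_{i,j})\|_2^2+(1_n^\intercal l_i\,\beta_i+\tfrac12\tilde\beta_i)c_{i,j}+\tfrac{1}{2\gamma}\big(\bar g(x_{i,j})+\bar\beta_i c_{i,j}\big)(1_n^\intercal l_i)^2 .$$ Then there exist $\mathbf{V},\mathbf{L},b_1,\gamma$ satisfying (i) $\gamma>0$; (ii) $V_x\ge0$ for all $x\in\mathbb{E}_{\mathcal{T}}$; (iii) $|\nabla V_i|\le l_i$ (componentwise) for all $i\in\mathbb{Z}_1^{m_{\mathcal{T}}}$; (iv) $H_{i,j}\le -b_1$ for all $i\in\mathbb{Z}_1^{m_{\mathcal{T}}}$ and all $j\in\mathbb{Z}_0^n$ with $x_{i,j}\neq0$. If moreover such values satisfy $b_1>0$, then, with $V$ the CPA interpolation of $\mathbf{V}$ on $\mathcal{T}$, the Hamilton–Jacobi inequality $$\nabla V^\intercal f(x)+\tfrac{1}{2\gamma}\|G(x)^\intercal\nabla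 V\|_2^2+\tfrac12\|h(x)\|_2^2\le 0$$ holds for all $x\in\Omega^\circ$, where at a point $x\in\sigma_i$ the gradient $\nabla V$ is taken to be $\nabla V_i$.
   Context: $\mathfrak{R}^n$ denotes the set of compact $\Omega\subset\mathbb{R}^n$ whose interior $\Omega^\circ$ is connected and contains the origin and with $\Omega=\overline{\Omega^\circ}$. An $n$-simplex is the convex hull of $n+1$ affinely independent points (its vertices). A triangulation of $\Omega\in\mathfrak{R}^n$ is a finite collection $\mathcal{T}=\{\sigma_i\}$ of $n$-simplexes whose union is $\Omega$ and such that any two intersect in a common face or the empty set; $\mathbb{E}_{\mathcal{T}}$ is its set of vertices. Convention: the vertex labelled $x_{i,0}$ of $\sigma_i$ is arbitrary unless $0\in\sigma_i$, in which case $x_{i,0}=0$. A function is in $\mathcal{C}^2(\mathcal{T})$ if it is continuous and $\mathcal{C}^2$ on each simplex of $\mathcal{T}$ (for vector/matrix functions, componentwise). Given vertex values $\{V_x\}$, let $X_i\in\mathbb{R}^{n\times n}$ have $j$-th row $(x_{i,j}-x_{i,0})^\intercal$ and $\bar V_i\in\mathbb{R}^n$ have $j$-th entry $V_{x_{i,j}}-V_{x_{i,0}}$; then $\nabla V_i=X_i^{-1}\bar V_i$ and the CPA (continuous piecewise affine) interpolation $V$ is the unique function affine on each $\sigma_i$ with gradient $\nabla V_i$ there and $V(x)=V_x$ at every vertex. $\|A\|_\infty$ for a matrix is the induced $\infty$-norm; $1_n$ is the all-ones vector; $|v|$ for a vector is componentwise absolute value. *)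

From HB Require Import structures.
From mathcomp Require Import all_boot all_order all_algebra.
From mathcomp Require Import all_classical all_reals all_analysis.
Import Order.TTheory GRing.Theory Num.Theory.
Import numFieldNormedType.Exports.

Set Implicit Arguments.
Unset Strict Implicit.
Unset Printing Implicit Defensive.

Local Open Scope classical_set_scope.
Local Open Scope ring_scope.

Section Defs.
Variable R : realType.

Definition frakR (n : nat) (O : set 'rV[R]_n) : Prop :=
  compact O /\ connected (interior O) /\ interior O 0 /\ O = closure (interior O).

(* convex hull of the vertices v j, j in S (a face of the simplex; S = set0 gives set0) *)
Definition hull_of (n : nat) (v : 'I_n.+1 -> 'rV[R]_n) (S : {set 'I_n.+1}) : set 'rV[R]_n :=
  [set y | exists lam : 'I_n.+1 -> R,
     (forall j, 0 <= lam j) /\ (forall j, j \notin S -> lam j = 0) /\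
     \sum_j lam j = 1 /\ y = \sum_j lam j *: v j].

Definition simplex (n : nat) (v : 'I_n.+1 -> 'rV[R]_n) : set 'rV[R]_n :=
  hull_of v [set: 'I_n.+1].

(* X_i : j-th row is (x_{i,j} - x_{i,0})^T, j = 1..n *)
Definition Xmat (n : nat) (v : 'I_n.+1 -> 'rV[R]_n) : 'M[R]_n :=
  \matrix_(j < n, k < n) (v (lift ord0 j) - v ord0) 0 k.

(* triangulation of O given by m_T simplices with vertices x i j, including the
   vertex-labelling convention x_{i,0} = 0 whenever 0 \in sigma_i *)
Definition triangulation (n mT : nat) (x : 'I_mT -> 'I_n.+1 -> 'rV[R]_n)
    (O : set 'rV[R]_n) : Prop :=
  (forall i, Xmat (x i) \in unitmx) /\
  O = [set y | exists i, simplex (x i) y] /\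
  (forall i k, i != k -> exists S1 S2,
      simplex (x i) `&` simplex (x k) = hull_of (x i) S1 /\
      simplex (x i) `&` simplex (x k) = hull_of (x k) S2) /\
  (forall i, simplex (x i) 0 -> x i ord0 = 0).

Definition partial (n : nat) (r : 'I_n) (F : 'rV[R]_n -> R) : 'rV[R]_n -> R :=
  fun y => derive F y (delta_mx 0 r).

Definition C2_on (n : nat) (U : set 'rV[R]_n) (F : 'rV[R]_n -> R) : Prop :=
  open U /\
  (forall y, U y -> differentiable F y) /\
  (forall r y, U y -> differentiable (partial r F) y) /\
  (forall q r y, U y -> {for y, continuous (partial q (partial r F))}).

(* F is a C^2 extension of g from the closed set S (g is C^2 on S) *)
Definition C2_ext (n : nat) (S : set 'rV[R]_n) (g F : 'rV[R]_n -> R) : Prop :=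
  exists U, S `<=` U /\ C2_on U F /\ (forall y, S y -> F y = g y).

Definition C2T (n mT : nat) (x : 'I_mT -> 'I_n.+1 -> 'rV[R]_n) (O : set 'rV[R]_n)
    (g : 'rV[R]_n -> R) : Prop :=
  {within O, continuous g} /\ (forall i, exists F, C2_ext (simplex (x i)) g F).

Definition norm2 (a b : nat) (A : 'M[R]_(a, b)) : R :=
  Num.sqrt (\sum_i \sum_j A i j ^+ 2).

(* induced infinity-norm of a square matrix = max absolute row sum *)
Definition norminf (n : nat) (A : 'M[R]_n) : R :=
  \big[Num.max/0]_(r < n) \sum_(c < n) `|A r c|.

Definition gbar (n m : nat) (G : 'rV[R]_n -> 'M[R]_(n, m)) (y : 'rV[R]_n) : R :=
  norminf (G y *m (G y)^T).

Definition Vbar (n : nat) (V : 'rV[R]_n -> R) (v : 'I_n.+1 -> 'rV[R]_n) : 'cV[R]_n :=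
  \col_(j < n) (V (v (lift ord0 j)) - V (v ord0)).

Definition gradV (n : nat) (V : 'rV[R]_n -> R) (v : 'I_n.+1 -> 'rV[R]_n) : 'cV[R]_n :=
  invmx (Xmat v) *m Vbar V v.

Definition cconst (n : nat) (v : 'I_n.+1 -> 'rV[R]_n) (j : 'I_n.+1) : R :=
  (n%:R / 2) * norm2 (v j - v ord0) *
  (\big[Num.max/0]_(k < n.+1 | k != ord0) norm2 (v k - v ord0) + norm2 (v j - v ord0)).

Definition sum1 (n : nat) (l : 'cV[R]_n) : R := \sum_k l k 0.

Definition Hij (n m q : nat) (f : 'rV[R]_n -> 'rV[R]_n) (G : 'rV[R]_n -> 'M[R]_(n, m))
    (h : 'rV[R]_n -> 'rV[R]_q) (V : 'rV[R]_n -> R) (v : 'I_n.+1 -> 'rV[R]_n)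
    (l : 'cV[R]_n) (beta tbeta bbeta gamma : R) (j : 'I_n.+1) : R :=
  (f (v j) *m gradV V v) 0 0 + 2^-1 * norm2 (h (v j)) ^+ 2
  + (sum1 l * beta + 2^-1 * tbeta) * cconst v j
  + (2 * gamma)^-1 * (gbar G (v j) + bbeta * cconst v j) * sum1 l ^+ 2.

Definition HJ (n m q : nat) (f : 'rV[R]_n -> 'rV[R]_n) (G : 'rV[R]_n -> 'M[R]_(n, m))
    (h : 'rV[R]_n -> 'rV[R]_q) (gamma : R) (p : 'cV[R]_n) (y : 'rV[R]_n) : R :=
  (f y *m p) 0 0 + (2 * gamma)^-1 * norm2 ((G y)^T *m p) ^+ 2
  + 2^-1 * norm2 (h y) ^+ 2.

Definition conds (n m q mT : nat) (x : 'I_mT -> 'I_n.+1 -> 'rV[R]_n)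
    (f : 'rV[R]_n -> 'rV[R]_n) (G : 'rV[R]_n -> 'M[R]_(n, m)) (h : 'rV[R]_n -> 'rV[R]_q)
    (beta tbeta bbeta : 'I_mT -> R)
    (V : 'rV[R]_n -> R) (L : 'I_mT -> 'cV[R]_n) (b1 gamma : R) : Prop :=
  0 < gamma /\
  (forall i j, 0 <= V (x i j)) /\
  (forall i k, `|gradV V (x i) k 0| <= L i k 0) /\
  (forall i j, x i j != 0 ->
     Hij f G h V (x i) (L i) (beta i) (tbeta i) (bbeta i) gamma j <= - b1).

End Defs.

(* On a simplex, every C^2 function differs from the affine interpolation of its vertex
   values by at most (second-derivative bound) * sum_j lambda_j c_{i,j}: this is Taylor's
   formula at x_{i,0} along segments, the linear parts cancelling because the barycentric
   weights sum to one.  Applied to the components of f, to h^T h and to gbar, and combined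
   with ||G^T p||^2 <= gbar (1^T l)^2 for |p| <= l, it bounds the Hamilton-Jacobi expression
   at a point of sigma_i by the barycentric average of the H_{i,j}.  Each H_{i,j} is <= -b1 < 0,
   except at a vertex at the origin, where it vanishes because f, h, gbar and c_{i,0} do. *)

From HB Require Import structures.
From mathcomp Require Import all_boot all_order all_algebra.
From mathcomp Require Import all_classical all_reals all_analysis.
From mathcomp Require Import ring lra.
Import Order.TTheory GRing.Theory Num.Theory.
Import numFieldNormedType.Exports.
Set Implicit Arguments.
Unset Strict Implicit.
Unset Printing Implicit Defensive.

Local Open Scope classical_set_scope.
Local Open Scope ring_scope.

Section Taylor.
Variable R : realType.

Lemma taylor_remainder_le (f f1 f2 : R -> R) (K : R) :
  (forall t : R, t \in `[0, 1] -> is_derive t 1 f (f1 t)) ->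
  (forall t : R, t \in `[0, 1] -> is_derive t 1 f1 (f2 t)) ->
  (forall t : R, t \in `[0, 1] -> f2 t <= K) ->
  f 1 - f 0 - f1 0 <= K / 2.
Proof.
move=> df df1 f2K.
(* The MVT gives [g 1 - g 0 = f1 c - f1 0 - K c], which the MVT for [f1] on [[0, c]]
   shows to be nonpositive. *)
pose g (t : R) := f t - (f1 0 * t + K / 2 * (t * t)).
have dg (t : R) : t \in `[0, 1] -> is_derive t 1 g (f1 t - (f1 0 + K * t)).
  move=> /df dft; apply: (is_derive_eq (is_deriveB dft (is_deriveD
    (is_deriveM (is_derive_cst (f1 0) t 1) (is_derive_id t 1))
    (is_deriveM (is_derive_cst (K / 2) t 1)
                (is_deriveM (is_derive_id t 1) (is_derive_id t 1)))))).
  by rewrite /GRing.scale /=; lra.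
have cg : {within `[0, 1], continuous g}.
  by apply: derivable_within_continuous => t /dg[].
have [c c01 gc] := MVT (@ltr01 R) (fun t t01 => dg t (subset_itv_oo_cc t01)) cg.
move: (c01); rewrite in_itv /= => /andP[/ltW c0 /ltW c1].
have sub (s : R) : s \in `[0, c] -> s \in `[0, 1].
  by rewrite !in_itv /= => /andP[-> /le_trans]; apply.
have cf1 : {within `[0, c], continuous f1}.
  by apply: derivable_within_continuous => t /sub /df1[].
have [d d0c f1d] := MVT_segment c0
  (fun t t0c => df1 t (sub t (subset_itv_oo_cc t0c))) cf1.
have := f2K d (sub d d0c).
rewrite /g in gc; nra.
Qed.

Lemma taylor_remainder_norm_le (f f1 f2 : R -> R) (K : R) :
  (forall t : R, t \in `[0, 1] -> is_derive t 1 f (f1 t)) ->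
  (forall t : R, t \in `[0, 1] -> is_derive t 1 f1 (f2 t)) ->
  (forall t : R, t \in `[0, 1] -> `|f2 t| <= K) ->
  `|f 1 - f 0 - f1 0| <= K / 2.
Proof.
move=> df df1 f2K; rewrite ler_norml; apply/andP; split; last first.
  by apply: taylor_remainder_le df df1 _ => t /f2K; apply: le_trans (ler_norm _).
suff : - f 1 - - f 0 - - f1 0 <= K / 2 by lra.
apply: (@taylor_remainder_le (- f) (- f1) (- f2)).
- by move=> t /df; apply: is_deriveN.
- by move=> t /df1; apply: is_deriveN.
- by move=> t /f2K; rewrite /= -normrN; apply: le_trans (ler_norm _).
Qed.

Lemma is_derive_line n (F : 'rV[R]_n -> R) (a d : 'rV[R]_n) (t : R) :
  derivable F (t *: d + a) d ->
  is_derive t 1 (fun s : R => F (s *: d + a)) ('D_d F (t *: d + a)).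
Proof.
move=> dF.
have E : (fun h : R => h^-1 *: (((fun s : R => F (s *: d + a)) \o shift t) (h *: 1)
            - F (t *: d + a)))
       = (fun h : R => h^-1 *: ((F \o shift (t *: d + a)) (h *: d) - F (t *: d + a))).
  by apply: funext => h /=; rewrite -[h%:A]/(h * 1) mulr1 scalerDl addrA.
by split; [rewrite /derivable E | rewrite /derive E].
Qed.

Lemma derive_partialE n (F : 'rV[R]_n -> R) (z d : 'rV[R]_n) :
  differentiable F z -> 'D_d F z = \sum_(r < n) d 0 r * partial r F z.
Proof.
move=> dF; rewrite deriveE // {1}(row_sum_delta d) linear_sum.
by apply: eq_bigr => r _; rewrite linearZ /partial deriveE.
Qed.

Definition norm1 n (w : 'rV[R]_n) := \sum_(r < n) `|w 0 r|.

Lemma taylor_segment_le n (F : 'rV[R]_n -> R) (S : set 'rV[R]_n) (p d : 'rV[R]_n) (B : R) :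
  (forall z, S z -> differentiable F z) ->
  (forall r z, S z -> differentiable (partial r F) z) ->
  (forall q r z, S z -> `|partial q (partial r F) z| <= B) ->
  (forall t : R, t \in `[0, 1] -> S (t *: d + p)) ->
  `|F (d + p) - F p - 'D_d F p| <= B / 2 * norm1 d ^+ 2.
Proof.
move=> dF dpF ddFB Sseg.
pose phi1 (s : R) := \sum_(r < n) d 0 r * partial r F (s *: d + p).
pose phi2 (s : R) := \sum_(r < n) d 0 r *
                 \sum_(q < n) d 0 q * partial q (partial r F) (s *: d + p).
have dphi (t : R) : t \in `[0, 1] -> is_derive t 1 (fun s => F (s *: d + p)) (phi1 t).
  move=> /Sseg St; rewrite /phi1 -derive_partialE; last exact: dF.
  exact/is_derive_line/diff_derivable/dF.
have dphi1 (t : R) : t \in `[0, 1] -> is_derive t 1 phi1 (phi2 t).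
  move=> /Sseg St.
  have -> : phi1 = \sum_(r < n) (d 0 r \*: (fun s => partial r F (s *: d + p))).
    by apply: funext => s; rewrite fct_sumE.
  apply: is_derive_sum => r; apply: is_deriveZ.
  rewrite -derive_partialE; last exact: dpF.
  exact/is_derive_line/diff_derivable/dpF.
have phi2B (t : R) : t \in `[0, 1] -> `|phi2 t| <= B * norm1 d ^+ 2.
  move=> /Sseg St.
  rewrite expr2 mulrA mulrC /norm1 mulr_suml.
  apply: le_trans (ler_norm_sum _ _ _) _; apply: ler_sum => r _.
  rewrite normrM; apply: ler_wpM2l => //; rewrite mulr_sumr.
  apply: le_trans (ler_norm_sum _ _ _) _; apply: ler_sum => q _.
  by rewrite normrM mulrC; apply: ler_wpM2r => //; apply: ddFB.
have := taylor_remainder_norm_le dphi dphi1 phi2B.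
have S0 : S p by have := Sseg 0; rewrite scale0r add0r; apply; rewrite in_itv /= lexx ler01.
rewrite /phi1 scale1r scale0r add0r -derive_partialE; first by rewrite mulrAC.
exact: dF p S0.
Qed.

End Taylor.

Section Simplex.
Variable R : realType.

Lemma simplex_vertex n (v : 'I_n.+1 -> 'rV[R]_n) j : simplex v (v j).
Proof.
exists (fun k => (k == j)%:R); split; first by move=> k; rewrite ler0n.
split; first by move=> k; rewrite !inE.
split; first by rewrite (bigD1 j) //= eqxx big1 ?addr0 // => k /negbTE ->.
by rewrite (bigD1 j) //= eqxx scale1r big1 ?addr0 // => k /negbTE ->; rewrite scale0r.
Qed.

Lemma simplex_segment n (v : 'I_n.+1 -> 'rV[R]_n) a b (t : R) :
  simplex v a -> simplex v b -> t \in `[0, 1] -> simplex v (t *: (b - a) + a).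
Proof.
move=> [la [la0 [_ [la1 ->]]]] [lb [lb0 [_ [lb1 ->]]]].
rewrite in_itv /= => /andP[t0 t1].
exists (fun k => t * lb k + (1 - t) * la k); split.
  by move=> k; rewrite addr_ge0 // mulr_ge0 // subr_ge0.
split; first by move=> k; rewrite !inE.
split; first by rewrite big_split /= -!mulr_sumr lb1 la1; ring.
under [RHS]eq_bigr do rewrite scalerDl -!scalerA.
by rewrite big_split /= -!scaler_sumr scalerBl scale1r scalerBr addrA addrAC.
Qed.

Lemma sqr_wsum_le k (w a : 'I_k -> R) :
  (forall i, 0 <= w i) ->
  (\sum_i w i * a i) ^+ 2 <= (\sum_i w i) * \sum_i w i * a i ^+ 2.
Proof.
move=> w0.
have : 0 <= \sum_i \sum_j w i * w j * (a i - a j) ^+ 2.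
  by do 2![apply: sumr_ge0 => ? _]; rewrite mulr_ge0 ?sqr_ge0 ?mulr_ge0.
have -> : \sum_i \sum_j w i * w j * (a i - a j) ^+ 2 =
    \sum_i ((w i * a i ^+ 2) * (\sum_j w j) + w i * (\sum_j w j * a j ^+ 2)
            - (2 * (w i * a i)) * (\sum_j w j * a j)).
  apply: eq_bigr => i _; rewrite !mulr_sumr -big_split -sumrB /=.
  by apply: eq_bigr => j _; ring.
rewrite sumrB big_split /= -!mulr_suml -mulr_sumr; lra.
Qed.

Lemma norm2_rowE n (w : 'rV[R]_n) : norm2 w ^+ 2 = \sum_(r < n) w 0 r ^+ 2.
Proof.
rewrite /norm2 sqr_sqrtr; first by rewrite big_ord1.
by do 2![apply: sumr_ge0 => ? _]; apply: sqr_ge0.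
Qed.

Lemma norm2_0 a b : norm2 (0 : 'M[R]_(a, b)) = 0.
Proof. by rewrite /norm2 big1 ?sqrtr0 // => i _; rewrite big1 // => j _; rewrite mxE expr0n. Qed.

Lemma norm1_ge0 n (w : 'rV[R]_n) : 0 <= norm1 w.
Proof. exact: sumr_ge0. Qed.

Lemma norm1_sqr_le n (w : 'rV[R]_n) : norm1 w ^+ 2 <= n%:R * norm2 w ^+ 2.
Proof.
have := @sqr_wsum_le n (fun _ => 1) (fun r => `|w 0 r|) (fun _ => ler01).
rewrite sumr_const card_ord norm2_rowE.
under eq_bigr do rewrite mul1r.
congr (_ <= _ * _); apply: eq_bigr => r _.
by rewrite mul1r real_normK ?num_real.
Qed.

Lemma norm1_wsum_sqr_le n k (lam : 'I_k -> R) (w : 'I_k -> 'rV[R]_n) :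
  (forall j, 0 <= lam j) -> \sum_j lam j = 1 ->
  norm1 (\sum_j lam j *: w j) ^+ 2 <= \sum_j lam j * norm1 (w j) ^+ 2.
Proof.
move=> lam0 lam1.
have triangle : norm1 (\sum_j lam j *: w j) <= \sum_j lam j * norm1 (w j).
  rewrite /norm1; under [X in _ <= X]eq_bigr do rewrite mulr_sumr.
  rewrite exchange_big /=; apply: ler_sum => r _.
  rewrite summxE; apply: le_trans (ler_norm_sum _ _ _) _; apply: ler_sum => j _.
  by rewrite mxE normrM ger0_norm.
apply: (@le_trans _ _ ((\sum_j lam j * norm1 (w j)) ^+ 2)).
  by rewrite ler_pXn2r ?nnegrE ?norm1_ge0 ?sumr_ge0 // => j _; rewrite mulr_ge0 ?norm1_ge0.
by have := sqr_wsum_le (fun j => norm1 (w j)) lam0; rewrite lam1 mul1r.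
Qed.

Lemma norm1_sqr_le_cconst n (v : 'I_n.+1 -> 'rV[R]_n) j : norm1 (v j - v ord0) ^+ 2 <= cconst v j.
Proof.
set e := norm2 (v j - v ord0).
set M := \big[Num.max/0]_(k < n.+1 | k != ord0) norm2 (v k - v ord0).
have eM : e <= M.
  have [j0|jn0] := eqVneq j ord0; last exact: le_bigmax_cond.
  by rewrite /e /M j0 subrr norm2_0 bigmax_idl le_max lexx.
have e0 : 0 <= e := sqrtr_ge0 _.
apply: le_trans (norm1_sqr_le _) _.
rewrite /cconst -/e -/M (_ : n%:R / 2 * e * (M + e) = n%:R * ((e * M + e ^+ 2) / 2)); last by ring.
by rewrite ler_wpM2l ?ler0n // ler_pdivlMr // mulr_natr mulr2n lerD2r expr2 ler_wpM2l.
Qed.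

Lemma wsumB n k (lam : 'I_k -> R) (w : 'I_k -> 'rV[R]_n) p :
  \sum_j lam j = 1 -> \sum_j lam j *: w j - p = \sum_j lam j *: (w j - p).
Proof.
move=> lam1; under [RHS]eq_bigr do rewrite scalerBr.
by rewrite sumrB -scaler_suml lam1 scale1r.
Qed.

End Simplex.

Section Interpolation.
Variables (R : realType) (n : nat) (v : 'I_n.+1 -> 'rV[R]_n).

Lemma interpolation_error_le (g F : 'rV[R]_n -> R) (B : R) (lam : 'I_n.+1 -> R) :
  0 <= B -> C2_ext (simplex v) g F ->
  (forall q r z, simplex v z -> `|partial q (partial r F) z| <= B) ->
  (forall j, 0 <= lam j) -> \sum_j lam j = 1 ->
  `|g (\sum_j lam j *: v j) - \sum_j lam j * g (v j)| <= B * \sum_j lam j * cconst v j.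
Proof.
move=> B0 [U [SU [[_ [dF [dpF _]]] Fg]]] ddFB lam0 lam1.
set y := \sum_j lam j *: v j; set p := v ord0.
have Sy : simplex v y by exists lam; split=> //; split=> // k; rewrite !inE.
have dFp : differentiable F p by apply/dF/SU/simplex_vertex.
(* The linear part of the Taylor expansion at [p] cancels in the interpolation error. *)
pose e a := F a - F p - 'd F p (a - p).
have eB a : simplex v a -> `|e a| <= B / 2 * norm1 (a - p) ^+ 2.
  move=> Sa; rewrite /e -deriveE //.
  have := @taylor_segment_le _ _ F (simplex v) p (a - p) B
    (fun z Sz => dF z (SU z Sz)) (fun r z Sz => dpF r z (SU z Sz)) ddFB
    (fun t t01 => simplex_segment (simplex_vertex v ord0) Sa t01).
  by rewrite subrK.
have lin : \sum_j lam j * 'd F p (v j - p) = 'd F p (y - p).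
  by rewrite /y wsumB // linear_sum; apply: eq_bigr => j _; rewrite linearZ.
have -> : g y - \sum_j lam j * g (v j) = e y - \sum_j lam j * e (v j).
  rewrite -Fg // (eq_bigr (fun j => lam j * F (v j))) => [|j _]; last first.
    by rewrite Fg //; apply: simplex_vertex.
  rewrite /e -lin; under [X in _ = _ - X]eq_bigr do rewrite !mulrBr.
  by rewrite !sumrB -mulr_suml lam1 mul1r; ring.
have jensen := norm1_wsum_sqr_le (fun j => v j - p) lam0 lam1.
rewrite -wsumB // -/y in jensen.
apply: le_trans (ler_normB _ _) _.
apply: (@le_trans _ _ (B * \sum_j lam j * norm1 (v j - p) ^+ 2)).
  rewrite [X in _ <= X](_ : _ = B / 2 * \sum_j lam j * norm1 (v j - p) ^+ 2
                              + B / 2 * \sum_j lam j * norm1 (v j - p) ^+ 2); last first.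
    by rewrite -mulrDl -splitr.
  apply: lerD; first by apply: le_trans (eB _ Sy) _; rewrite ler_wpM2l ?divr_ge0.
  rewrite mulr_sumr; apply: le_trans (ler_norm_sum _ _ _) _; apply: ler_sum => j _.
  by rewrite normrM ger0_norm // mulrCA ler_wpM2l // eB //; apply: simplex_vertex.
rewrite ler_wpM2l // ler_sum // => j _.
by rewrite ler_wpM2l // norm1_sqr_le_cconst.
Qed.

End Interpolation.

Section C2Closure.
Variable R : realType.

Lemma near_eq_differentiable (V W : normedModType R) (f g : V -> W) (x : V) :
  (\forall y \near x, f y = g y) -> differentiable g x -> differentiable f x.
Proof.
move=> fg dg.
have fx : f x = g x := nbhs_singleton fg.
have fg0 : \forall h \near 0, f (h + x) = g (h + x).
  by move: fg; rewrite (near_shift 0 x) /= subr0.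
have dfE : f \o shift x = cst (f x) + 'd g x +o_ 0 id.
  apply/eqaddoP => eps eps0; move/eqaddoP: (diff_locally dg) => /(_ eps eps0).
  apply: filter_app; move: fg0; apply: filter_app; near=> h => Eh.
  by rewrite !fctE /= Eh fx.
apply/diff_locallyP; rewrite (diff_unique (diff_continuous dg) dfE).
by split; [exact: diff_continuous | exact: dfE].
Unshelve. all: by end_near. Qed.

Lemma near_eq_continuous (T : topologicalType) (W : normedModType R) (f g : T -> W) x :
  (\forall y \near x, f y = g y) -> {for x, continuous g} -> {for x, continuous f}.
Proof.
move=> fg cg; have gf : \forall y \near x, g y = f y by apply: filterS fg.
rewrite /prop_for /continuous_at (nbhs_singleton fg).
exact: cvg_trans (near_eq_cvg gf) cg.
Qed.

Variable n : nat.
Implicit Types (U : set 'rV[R]_n) (F G : 'rV[R]_n -> R).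

Lemma open_near U y : open U -> U y -> \forall z \near y, U z.
Proof. by rewrite openE => /[apply]. Qed.

Lemma open_near_eq U F G y : open U -> (forall z, U z -> F z = G z) -> U y ->
  \forall z \near y, F z = G z.
Proof. by move=> oU FG /(open_near oU); apply: filterS. Qed.

Definition C1_on U F := [/\ open U, forall y, U y -> differentiable F y &
  forall r y, U y -> {for y, continuous (partial r F)}].

Lemma C2_onP U F : C2_on U F <-> C1_on U F /\ forall r, C1_on U (partial r F).
Proof.
split=> [[oU [dF [dpF cF]]]|[[oU dF _] C1pF]].
  split=> [|r]; split=> [|y Uy|r' y Uy]; try exact: oU.
  - exact: dF.
  - exact/differentiable_continuous/dpF.
  - exact: dpF.
  - exact: cF.
split; first exact: oU.
split; first exact: dF.
by split=> [r y Uy|q r y Uy]; have [_ dpF cpF] := C1pF r; [exact: dpF | exact: cpF].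
Qed.

Lemma C1_on_eq U F G : (forall y, U y -> F y = G y) -> C1_on U G -> C1_on U F.
Proof.
move=> FG [oU dG cG]; split=> [|y Uy|r y Uy]; first exact: oU.
  exact: near_eq_differentiable (open_near_eq oU FG Uy) (dG y Uy).
apply: near_eq_continuous (cG r y Uy).
by apply: filterS (open_near oU Uy) => z Uz; apply/near_eq_derive/(open_near_eq oU FG Uz).
Qed.

Lemma partialD r F G y : differentiable F y -> differentiable G y ->
  partial r (F + G) y = partial r F y + partial r G y.
Proof. by move=> dF dG; apply: deriveD; apply: diff_derivable. Qed.

Lemma partialM r F G y : differentiable F y -> differentiable G y ->
  partial r (F * G) y = F y * partial r G y + G y * partial r F y.
Proof. by move=> dF dG; rewrite /partial deriveM //; apply: diff_derivable. Qed.

Lemma C1_onD U F G : C1_on U F -> C1_on U G -> C1_on U (F + G).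
Proof.
move=> [oU dF cF] [_ dG cG]; split=> [|y Uy|r y Uy]; first exact: oU.
  exact: differentiableD (dF y Uy) (dG y Uy).
apply: near_eq_continuous (continuousD (cF r y Uy) (cG r y Uy)).
by apply: filterS (open_near oU Uy) => z Uz; apply: partialD; [exact: dF | exact: dG].
Qed.

Lemma C1_onM U F G : C1_on U F -> C1_on U G -> C1_on U (F * G).
Proof.
move=> [oU dF cF] [_ dG cG]; split=> [|y Uy|r y Uy]; first exact: oU.
  exact: differentiableM (dF y Uy) (dG y Uy).
have cF0 := differentiable_continuous (dF y Uy).
have cG0 := differentiable_continuous (dG y Uy).
apply: near_eq_continuous
  (continuousD (continuousM cF0 (cG r y Uy)) (continuousM cG0 (cF r y Uy))).
by apply: filterS (open_near oU Uy) => z Uz; apply: partialM; [exact: dF | exact: dG].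
Qed.

Lemma partial_cst r (c : R) : partial r (cst c : 'rV[R]_n -> R) = cst 0.
Proof. by apply: funext => z; apply: derive_cst. Qed.

Lemma C1_on_cst U (c : R) : open U -> C1_on U (cst c).
Proof.
move=> oU; split=> [|y _|r y _]; [exact: oU | exact: differentiable_cst |].
by rewrite partial_cst; apply: cst_continuous.
Qed.

Lemma C2_onD U F G : C2_on U F -> C2_on U G -> C2_on U (F + G).
Proof.
move=> /C2_onP[C1F C1pF] /C2_onP[C1G C1pG]; apply/C2_onP; split; first exact: C1_onD.
move=> r; apply: (@C1_on_eq _ _ (partial r F + partial r G)).
  by case: C1F C1G => _ dF _ [_ dG _] y Uy; apply: partialD; [exact: dF | exact: dG].
exact: C1_onD (C1pF r) (C1pG r).
Qed.

Lemma C2_onM U F G : C2_on U F -> C2_on U G -> C2_on U (F * G).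
Proof.
move=> /C2_onP[C1F C1pF] /C2_onP[C1G C1pG]; apply/C2_onP; split; first exact: C1_onM.
move=> r; apply: (@C1_on_eq _ _ (F * partial r G + G * partial r F)).
  by case: C1F C1G => _ dF _ [_ dG _] y Uy; apply: partialM; [exact: dF | exact: dG].
exact: C1_onD (C1_onM C1F (C1pG r)) (C1_onM C1G (C1pF r)).
Qed.

Lemma C2_on_cst U (c : R) : open U -> C2_on U (cst c).
Proof.
move=> oU; apply/C2_onP; split=> [|r]; first exact: C1_on_cst.
by rewrite partial_cst; apply: C1_on_cst.
Qed.

Lemma C2_on_subset U V F : open V -> V `<=` U -> C2_on U F -> C2_on V F.
Proof.
move=> oV VU [_ [dF [dpF cF]]]; split; first exact: oV.
split=> [y /VU|]; first exact: dF.
by split=> [r y /VU|q r y /VU]; [exact: dpF | exact: cF].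
Qed.

Definition C2_extendable (S : set 'rV[R]_n) (g : 'rV[R]_n -> R) := exists F, C2_ext S g F.

Lemma C2_ext_common S g1 g2 F1 F2 : C2_ext S g1 F1 -> C2_ext S g2 F2 ->
  exists U, [/\ S `<=` U, C2_on U F1, C2_on U F2 &
                forall y, S y -> F1 y = g1 y /\ F2 y = g2 y].
Proof.
move=> [U1 [SU1 [C1 E1]]] [U2 [SU2 [C2 E2]]].
have oU : open (U1 `&` U2) by apply: openI; [case: C1 | case: C2].
exists (U1 `&` U2); split.
- by move=> y Sy; split; [exact: SU1 | exact: SU2].
- exact: C2_on_subset oU (@subIsetl _ U1 U2) C1.
- exact: C2_on_subset oU (@subIsetr _ U1 U2) C2.
- by move=> y Sy; rewrite E1 ?E2.
Qed.

Lemma C2_extendableD S g1 g2 :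
  C2_extendable S g1 -> C2_extendable S g2 -> C2_extendable S (g1 + g2).
Proof.
move=> [F1 E1] [F2 E2]; have [U [SU C1 C2 E]] := C2_ext_common E1 E2.
exists (F1 + F2), U; split; first exact: SU.
split; first exact: C2_onD C1 C2.
by move=> y /E[e1 e2]; rewrite !fctE e1 e2.
Qed.

Lemma C2_extendableM S g1 g2 :
  C2_extendable S g1 -> C2_extendable S g2 -> C2_extendable S (g1 * g2).
Proof.
move=> [F1 E1] [F2 E2]; have [U [SU C1 C2 E]] := C2_ext_common E1 E2.
exists (F1 * F2), U; split; first exact: SU.
split; first exact: C2_onM C1 C2.
by move=> y /E[e1 e2]; rewrite !fctE e1 e2.
Qed.

Lemma C2_extendable_sum_sqr S k (g : 'I_k -> 'rV[R]_n -> R) :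
  (forall i, C2_extendable S (g i)) -> C2_extendable S (fun y => \sum_i g i y ^+ 2).
Proof.
move=> Cg.
have -> : (fun y => \sum_i g i y ^+ 2) = \sum_i (g i * g i).
  by apply: funext => y; rewrite fct_sumE; apply: eq_bigr => i _; rewrite expr2.
elim/big_ind: _ => [|g1 g2|i _]; [|exact: C2_extendableD|exact: C2_extendableM].
by exists (cst 0), setT; split=> [y //|]; split=> [|y //]; exact/C2_on_cst/openT.
Qed.

End C2Closure.

Section Norms.
Variables (R : realType) (n m : nat).

Lemma norminf_ge0 (A : 'M[R]_n) : 0 <= norminf A.
Proof. by rewrite /norminf bigmax_idl le_max lexx. Qed.

Lemma norm2_trmx_mulmx_le (A : 'M[R]_(n, m)) (p l : 'cV[R]_n) :
  (forall k, `|p k 0| <= l k 0) ->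
  norm2 (A^T *m p) ^+ 2 <= norminf (A *m A^T) * sum1 l ^+ 2.
Proof.
move=> pl; set M := A *m A^T; set S := sum1 l.
have l0 k : 0 <= l k 0 by apply: le_trans (pl k).
have S0 : 0 <= S by apply: sumr_ge0 => k _; apply: l0.
have pS k : `|p k 0| <= S.
  by apply: le_trans (pl k) _; rewrite /S /sum1 (bigD1 k) //= lerDl sumr_ge0.
have -> : norm2 (A^T *m p) ^+ 2 = \sum_a \sum_c p a 0 * p c 0 * M a c.
  rewrite /norm2 sqr_sqrtr; last by do 2![apply: sumr_ge0 => ? _]; apply: sqr_ge0.
  under eq_bigr do rewrite big_ord1 mxE expr2 mulr_suml.
  under eq_bigr do under eq_bigr do rewrite mulr_sumr.
  rewrite exchange_big /=; apply: eq_bigr => a _.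
  rewrite exchange_big /=; apply: eq_bigr => c _.
  by rewrite !mxE mulr_sumr; apply: eq_bigr => b _; rewrite !mxE; ring.
have row_le a : \sum_c p a 0 * p c 0 * M a c <= `|p a 0| * (S * norminf M).
  have rowM : \sum_c `|M a c| <= norminf M by apply: le_bigmax.
  apply: (@le_trans _ _ (\sum_c `|p a 0| * (S * `|M a c|))).
    apply: ler_sum => c _; apply: le_trans (ler_norm _) _.
    by rewrite !normrM -mulrA ler_wpM2l // ler_wpM2r.
  by rewrite -mulr_sumr ler_wpM2l // -mulr_sumr ler_wpM2l.
have sum_pS : \sum_a `|p a 0| <= S by apply: ler_sum => a _; apply: pl.
apply: le_trans (ler_sum _ (fun a _ => row_le a)) _.
rewrite -mulr_suml; apply: le_trans (ler_wpM2r (mulr_ge0 S0 (norminf_ge0 M)) sum_pS) _.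
by rewrite mulrA -expr2 mulrC.
Qed.

End Norms.

Section HamiltonJacobi.
Variables (R : realType) (n m q : nat).
Variables (f : 'rV[R]_n -> 'rV[R]_n) (G : 'rV[R]_n -> 'M[R]_(n, m)).
Variable (h : 'rV[R]_n -> 'rV[R]_q).
Variables (v : 'I_n.+1 -> 'rV[R]_n) (beta tbeta bbeta : R) (lam : 'I_n.+1 -> R).
Hypothesis n_gt0 : (0 < n)%N.
Hypothesis lam_ge0 : forall j, 0 <= lam j.
Hypothesis lam_sum1 : \sum_j lam j = 1.
Hypothesis Cf : forall k, C2_extendable (simplex v) (fun y => f y 0 k).
Hypothesis Ch : forall k, C2_extendable (simplex v) (fun y => h y 0 k).
Hypothesis Cg : C2_extendable (simplex v) (gbar G).
Hypothesis Bf : forall k F, C2_ext (simplex v) (fun y => f y 0 k) F ->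
  forall a b z, simplex v z -> `|partial a (partial b F) z| <= beta.
Hypothesis Bh : forall F, C2_ext (simplex v) (fun y => \sum_k h y 0 k ^+ 2) F ->
  forall a b z, simplex v z -> `|partial a (partial b F) z| <= tbeta.
Hypothesis Bg : forall F, C2_ext (simplex v) (gbar G) F ->
  forall a b z, simplex v z -> `|partial a (partial b F) z| <= bbeta.

Let y := \sum_j lam j *: v j.
Let C := \sum_j lam j * cconst v j.

Lemma interpolation_bound (g : 'rV[R]_n -> R) (B : R) :
  C2_extendable (simplex v) g ->
  (forall F, C2_ext (simplex v) g F ->
     forall a b z, simplex v z -> `|partial a (partial b F) z| <= B) ->
  `|g y - \sum_j lam j * g (v j)| <= B * C.
Proof.
move=> [F CF] BF; pose o := Ordinal n_gt0.
have B0 : 0 <= B := le_trans (normr_ge0 _) (BF F CF o o _ (simplex_vertex v ord0)).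
exact: interpolation_error_le B0 CF (BF F CF) lam_ge0 lam_sum1.
Qed.

Lemma drift_le (p l : 'cV[R]_n) : (forall k, `|p k 0| <= l k 0) ->
  (f y *m p) 0 0 <= \sum_j lam j * (f (v j) *m p) 0 0 + sum1 l * (beta * C).
Proof.
move=> pl.
have -> : \sum_j lam j * (f (v j) *m p) 0 0 = \sum_k (\sum_j lam j * f (v j) 0 k) * p k 0.
  under eq_bigr do rewrite mxE mulr_sumr.
  rewrite exchange_big /=; apply: eq_bigr => k _.
  by rewrite mulr_suml; apply: eq_bigr => j _; rewrite mulrA.
rewrite /sum1 mulr_suml -big_split mxE /=; apply: ler_sum => k _.
rewrite -lerBlDl -mulrBl; apply: le_trans (ler_norm _) _.
rewrite normrM mulrC ler_pM //.
exact: interpolation_bound (Cf k) (Bf (k:=k)).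
Qed.

Lemma output_le : norm2 (h y) ^+ 2 <= \sum_j lam j * norm2 (h (v j)) ^+ 2 + tbeta * C.
Proof.
rewrite norm2_rowE (eq_bigr (fun j => lam j * \sum_k h (v j) 0 k ^+ 2)) => [|j _].
  have := le_trans (ler_norm _) (interpolation_bound (C2_extendable_sum_sqr Ch) Bh).
  by rewrite /= lerBlDl addrC.
by rewrite norm2_rowE.
Qed.

Lemma gbar_le : gbar G y <= \sum_j lam j * gbar G (v j) + bbeta * C.
Proof.
have := le_trans (ler_norm _) (interpolation_bound Cg Bg).
by rewrite lerBlDl addrC.
Qed.

Lemma HJ_le_wsum_Hij (V : 'rV[R]_n -> R) (l : 'cV[R]_n) (gamma : R) :
  0 < gamma -> (forall k, `|gradV V v k 0| <= l k 0) ->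
  HJ f G h gamma (gradV V v) y <=
    \sum_j lam j * Hij f G h V v l beta tbeta bbeta gamma j.
Proof.
move=> gamma_gt0 pl; set p := gradV V v; set S := sum1 l.
have wsumE : \sum_j lam j * Hij f G h V v l beta tbeta bbeta gamma j =
   \sum_j lam j * (f (v j) *m p) 0 0 + 2^-1 * \sum_j lam j * norm2 (h (v j)) ^+ 2
   + (S * beta + 2^-1 * tbeta) * C
   + (2 * gamma)^-1 * S ^+ 2 * \sum_j lam j * gbar G (v j)
   + (2 * gamma)^-1 * S ^+ 2 * bbeta * C.
  rewrite /C !mulr_sumr -!big_split /=; apply: eq_bigr => j _.
  by rewrite /Hij -/p -/S; ring.
have control : norm2 ((G y)^T *m p) ^+ 2 <=
               (\sum_j lam j * gbar G (v j) + bbeta * C) * S ^+ 2.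
  exact: le_trans (norm2_trmx_mulmx_le _ pl) (ler_wpM2r (sqr_ge0 S) gbar_le).
have ig : 0 <= (2 * gamma)^-1 by rewrite invr_ge0 mulr_ge0 // ltW.
have := drift_le pl; have := output_le; have := ler_wpM2l ig control.
by rewrite /HJ wsumE -/p -/S; lra.
Qed.

End HamiltonJacobi.

Lemma Hij_vertex0 (R : realType) n m q
    (f : 'rV[R]_n -> 'rV[R]_n) (G : 'rV[R]_n -> 'M[R]_(n, m)) (h : 'rV[R]_n -> 'rV[R]_q)
    (V : 'rV[R]_n -> R) (v : 'I_n.+1 -> 'rV[R]_n) (l : 'cV[R]_n)
    (beta tbeta bbeta gamma : R) j :
  f 0 = 0 -> h 0 = 0 -> gbar G 0 = 0 -> v ord0 = 0 -> v j = 0 ->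
  Hij f G h V v l beta tbeta bbeta gamma j = 0.
Proof.
move=> f0 h0 g0 v00 vj0.
by rewrite /Hij /cconst vj0 v00 f0 h0 g0 subrr norm2_0 mul0mx mxE norm2_0; ring.
Qed.

(* Condition (iv) puts no sign constraint on [b1], so [V = 0] is always feasible. *)
Lemma conds_solvable (R : realType) n m q mT (x : 'I_mT -> 'I_n.+1 -> 'rV[R]_n)
    (f : 'rV[R]_n -> 'rV[R]_n) (G : 'rV[R]_n -> 'M[R]_(n, m)) (h : 'rV[R]_n -> 'rV[R]_q)
    (beta tbeta bbeta : 'I_mT -> R) :
  exists V L b1 gamma, conds x f G h beta tbeta bbeta V L b1 gamma.
Proof.
pose H i j := Hij f G h (fun _ => 0) (x i) 0 (beta i) (tbeta i) (bbeta i) 1 j.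
exists (fun _ => 0), (fun _ => 0), (- \big[Num.max/0]_i \big[Num.max/0]_j H i j), 1.
have grad0 i : gradV (fun _ => 0) (x i) = 0.
  rewrite /gradV (_ : Vbar _ _ = 0) ?mulmx0 //.
  by apply/matrixP => a b; rewrite !mxE subrr.
split; first exact: ltr01.
split; first by [].
split; first by move=> i k; rewrite grad0 !mxE normr0.
move=> i j _; rewrite opprK.
exact: le_trans (le_bigmax _ (H i) j) (le_bigmax _ (fun i => \big[Num.max/0]_j H i j) i).
Qed.

Theorem theorem1 (R : realType) (n m q : nat)
  (X : set 'rV[R]_n) (U : set 'rV[R]_m)
  (f : 'rV[R]_n -> 'rV[R]_n) (G : 'rV[R]_n -> 'M[R]_(n, m)) (h : 'rV[R]_n -> 'rV[R]_q)
  (Omega : set 'rV[R]_n) (mT : nat) (x : 'I_mT -> 'I_n.+1 -> 'rV[R]_n)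
  (beta tbeta bbeta : 'I_mT -> R) :
  (0 < n)%N -> (0 < m)%N -> (0 < q)%N ->
  frakR X -> frakR U ->
  f 0 = 0 -> h 0 = 0 -> gbar G 0 = 0 ->
  frakR Omega -> Omega `<=` X ->
  triangulation x Omega ->
  (forall p, C2T x Omega (fun y => f y 0 p)) ->
  (forall a b, C2T x Omega (fun y => G y a b)) ->
  (forall k, C2T x Omega (fun y => h y 0 k)) ->
  C2T x Omega (gbar G) ->
  (forall i p F, C2_ext (simplex (x i)) (fun y => f y 0 p) F ->
     forall q' r xi, simplex (x i) xi -> `|partial q' (partial r F) xi| <= beta i) ->
  (forall i F, C2_ext (simplex (x i)) (fun y => \sum_k h y 0 k ^+ 2) F ->
     forall q' r xi, simplex (x i) xi -> `|partial q' (partial r F) xi| <= tbeta i) ->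
  (forall i F, C2_ext (simplex (x i)) (gbar G) F ->
     forall q' r xi, simplex (x i) xi -> `|partial q' (partial r F) xi| <= bbeta i) ->
  (exists (V : 'rV[R]_n -> R) (L : 'I_mT -> 'cV[R]_n) (b1 gamma : R),
     conds x f G h beta tbeta bbeta V L b1 gamma) /\
  (forall (V : 'rV[R]_n -> R) (L : 'I_mT -> 'cV[R]_n) (b1 gamma : R),
     conds x f G h beta tbeta bbeta V L b1 gamma -> 0 < b1 ->
     forall i y, simplex (x i) y -> interior Omega y ->
       HJ f G h gamma (gradV V (x i)) y <= 0).
Proof.
move=> n_gt0 _ _ _ _ f0 h0 g0 _ _ [_ [_ [_ origin_vertex0]]] Cf _ Ch Cg Bf Bh Bg.
split; first exact: conds_solvable.
move=> V L b1 gamma [gamma_gt0 [_ [gradL Hneg]]] b1_gt0 i _ [lam [lam0 [_ [lam1 ->]]]] _.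
apply: le_trans (HJ_le_wsum_Hij n_gt0 lam0 lam1 (fun k => (Cf k).2 i) (fun k => (Ch k).2 i)
  (Cg.2 i) (Bf i) (Bh i) (Bg i) gamma_gt0 (gradL i)) _.
apply: sumr_le0 => j _; apply: mulr_ge0_le0 (lam0 j) _.
have [xij0|xij_neq0] := eqVneq (x i j) 0; last first.
  by apply: le_trans (Hneg i j xij_neq0) _; rewrite oppr_le0 ltW.
rewrite Hij_vertex0 //; apply: origin_vertex0.
by rewrite -xij0; apply: simplex_vertex.
Qed.
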